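(* Fix $n\in\mathbb{N}$, $n\ge 1$. For every $\Delta\in\mathcal{P}_n$, every $x\in\{0,1\}^n$ and every $i\in\mathbb{Z}_n$: $f^{(\Delta)}_{32,n}(x)_i=1$ if and only if $lab_\Delta((i+1,i))=lab_\Delta((i-1,i))=\oplus$ and $(x_{i-1},x_i,x_{i+1})=(1,0,1)$.
   Context: Cells are indexed by $\mathbb{Z}_n=\{0,\dots,n-1\}$, indices modulo $n$. Rule $32$ has local rule $r_{32}(x_1,x_2,x_3)=x_1\wedge\neg x_2\wedge x_3$ and global function $f_{32,n}(x)_i=r_{32}(x_{i-1},x_i,x_{i+1})$. An update schedule is an ordered partition $\Delta=(\Delta_1,\dots,\Delta_k)$ of $\mathbb{Z}_n$ into nonempty blocks; $\mathcal{P}_n$ is the set of them. For a block $B$ let $f^{(B)}(x)_i=f_{32,n}(x)_i$ if $i\in B$ and $x_i$ otherwise; $f^{(\Delta)}_{32,n}=f^{(\Delta_k)}\circ\cdots\circ f^{(\Delta_1)}$. For $u,v\in\mathbb{Z}_n$ with $u\in\Delta_a$, $v\in\Delta_b$, $lab_\Delta((u,v))=\oplus$ if $b\le a$ and $\ominus$ if $a<b$. *)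

From mathcomp Require Import all_boot.
Set Implicit Arguments. Unset Strict Implicit. Unset Printing Implicit Defensive.

Definition r32 (x1 x2 x3 : bool) : bool := [&& x1, ~~ x2 & x3].

Definition f32 (n : nat) (x : {ffun 'I_n -> bool}) : {ffun 'I_n -> bool} :=
  [ffun i => r32 (x (ord_pred i)) (x i) (x (ordS i))].

Definition fblock (n : nat) (B : pred 'I_n) (x : {ffun 'I_n -> bool})
  : {ffun 'I_n -> bool} :=
  [ffun i => if B i then f32 x i else x i].

(* An ordered partition (Delta_1,...,Delta_k) of Z_n into nonempty blocks is
   encoded by k and a surjection d : 'I_n -> 'I_k; Delta_{a+1} = d^-1(a). *)
Definition is_schedule (n k : nat) (d : {ffun 'I_n -> 'I_k}) : Prop :=
  forall a : 'I_k, exists i : 'I_n, d i = a.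

(* f^(Delta) = f^(Delta_k) o ... o f^(Delta_1): blocks applied in order 0..k-1 *)
Definition fsched (n k : nat) (d : {ffun 'I_n -> 'I_k}) (x : {ffun 'I_n -> bool})
  : {ffun 'I_n -> bool} :=
  foldl (fun y (a : 'I_k) => fblock [pred i | d i == a] y) x (enum 'I_k).

Inductive label := LPlus | LMinus.

Definition lab (n k : nat) (d : {ffun 'I_n -> 'I_k}) (u v : 'I_n) : label :=
  if (d v <= d u)%N then LPlus else LMinus.

From mathcomp Require Import all_boot.

Set Implicit Arguments.
Unset Strict Implicit.
Unset Printing Implicit Defensive.

(* Cell i is updated exactly once, when its block comes up; it then reads its
   own original value and the current values of its neighbours.  A neighbour
   whose block comes no earlier still holds its original value.  A neighbour
   whose block came earlier has already been updated, and rule 32 made it 1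
   only if x_i = 1, whereas a 1 at i needs x_i = 0.  Hence a 1 at i forces
   both neighbours into blocks no earlier than that of i, i.e. both labels are
   (+), and then it is exactly the pattern (1,0,1) of x. *)

Section ScheduleDynamics.

Variables (n k : nat) (d : {ffun 'I_n -> 'I_k}) (x : {ffun 'I_n -> bool}).

Definition fsched_upto (m : nat) : {ffun 'I_n -> bool} :=
  foldl (fun y (a : 'I_k) => fblock [pred i | d i == a] y) x (take m (enum 'I_k)).

Lemma fsched_uptoE : fsched d x = fsched_upto k.
Proof. by rewrite /fsched_upto take_oversize // size_enum_ord. Qed.

Lemma fsched_uptoS m c : m < k ->
  fsched_upto m.+1 c =
  if d c == m :> nat
  then r32 (fsched_upto m (ord_pred c)) (fsched_upto m c) (fsched_upto m (ordS c))
  else fsched_upto m c.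
Proof.
move=> lt_mk; rewrite /fsched_upto (take_nth (d c)) ?size_enum_ord // foldl_rcons.
by rewrite /fblock /f32 !ffunE /= -val_eqE /= nth_enum_ord.
Qed.

Lemma fsched_upto_before m c : m <= d c -> fsched_upto m c = x c.
Proof.
elim: m => [|m IHm] le_mdc; first by rewrite /fsched_upto take0.
have lt_mk : m < k by apply: leq_trans le_mdc (ltnW (ltn_ord _)).
by rewrite fsched_uptoS // gtn_eqF // IHm // ltnW.
Qed.

Lemma fsched_upto_after m c : d c < m -> m <= k ->
  fsched_upto m c =
  r32 (fsched_upto (d c) (ord_pred c)) (x c) (fsched_upto (d c) (ordS c)).
Proof.
elim: m => [|m IHm] // lt_dcm le_mk.
rewrite fsched_uptoS //; case: eqP => [<- | ne_dcm].
  by rewrite (@fsched_upto_before _ c (leqnn _)).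
apply: IHm (ltnW le_mk).
by rewrite ltn_neqAle -ltnS lt_dcm andbT; exact/eqP.
Qed.

Lemma fsched_upto_neighbour_of_zero c u :
  x c = false -> c = ord_pred u \/ c = ordS u ->
  fsched_upto (d c) u = (d c <= d u) && x u.
Proof.
move=> xc0 adj_cu; case: leqP => [le_dcu | lt_duc].
  exact: fsched_upto_before.
have state_c : fsched_upto (d u) c = false.
  by rewrite (@fsched_upto_before _ c (ltnW lt_duc)).
have le_dck : d c <= k := ltnW (ltn_ord _).
rewrite fsched_upto_after // /r32.
by case: adj_cu => <-; rewrite state_c ?andbF.
Qed.

End ScheduleDynamics.

Theorem mainTheorem12 (n : nat) (hn : (1 <= n)%N) (k : nat)
  (d : {ffun 'I_n -> 'I_k}) (hd : is_schedule d)
  (x : {ffun 'I_n -> bool}) (i : 'I_n) :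
  fsched d x i = true <->
  (lab d (ordS i) i = LPlus /\ lab d (ord_pred i) i = LPlus /\
   (x (ord_pred i), x i, x (ordS i)) = (true, false, true)).
Proof.
rewrite fsched_uptoE fsched_upto_after ?ltn_ord //.
case xi: (x i); first by split=> [|[_ [_ []]]]; rewrite /r32 ?andbF.
have -> : fsched_upto d x (d i) (ord_pred i) = (d i <= d (ord_pred i)) && x (ord_pred i).
  by apply: fsched_upto_neighbour_of_zero => //; right; rewrite ord_predK.
have -> : fsched_upto d x (d i) (ordS i) = (d i <= d (ordS i)) && x (ordS i).
  by apply: fsched_upto_neighbour_of_zero => //; left; rewrite ordSK.
rewrite /lab /r32 /=.
by case: (leqP (d i) (d (ord_pred i))); case: (leqP (d i) (d (ordS i)));
  case: (x (ord_pred i)); case: (x (ordS i)); split=> // -[] // _ [] // _ [].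
Qed.
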